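(* Every finite brace of square-free order is supersoluble.
   Context: A brace (skew left brace) is a set $B$ with two binary operations $+$ and $\cdot$ such that $(B,+)$ and $(B,\cdot)$ are groups and $a(b+c)=ab-a+ac$ for all $a,b,c\in B$; its order is $|B|$. For $a,b\in B$ put $\lambda_a(b)=-a+ab$; $\lambda\colon(B,\cdot)\to\operatorname{Aut}(B,+)$ is a homomorphism. An ideal of $B$ is a subset that is a subgroup of both groups, normal in $(B,+)$ and in $(B,\cdot)$, and invariant under all $\lambda_b$; quotients $B/I$ by ideals are braces. $\operatorname{Soc}(B)=\operatorname{Ker}\lambda\cap Z(B,+)$. A brace $B$ is supersoluble if there is a finite chain of ideals $\{0\}=I_0\le\dots\le I_n=B$ such that for each $i$, either $(I_{i+1}/I_i,+)$ is infinite cyclic and $I_{i+1}/I_i\le\operatorname{Soc}(B/I_i)$, or $I_{i+1}/I_i$ has prime order. *)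

From mathcomp Require Import all_boot all_algebra.
Set Implicit Arguments. Unset Strict Implicit. Unset Printing Implicit Defensive.

Record brace (T : finType) := Brace {
  badd : T -> T -> T; bzero : T; bopp : T -> T;
  bmul : T -> T -> T; bone : T; binv : T -> T;
  baddA : forall a b c, badd a (badd b c) = badd (badd a b) c;
  badd0l : forall a, badd bzero a = a;
  badd0r : forall a, badd a bzero = a;
  baddNl : forall a, badd (bopp a) a = bzero;
  baddNr : forall a, badd a (bopp a) = bzero;
  bmulA : forall a b c, bmul a (bmul b c) = bmul (bmul a b) c;
  bmul1l : forall a, bmul bone a = a;
  bmul1r : forall a, bmul a bone = a;
  bmulVl : forall a, bmul (binv a) a = bone;
  bmulVr : forall a, bmul a (binv a) = bone;
  bdist : forall a b c,
    bmul a (badd b c) = badd (badd (bmul a b) (bopp a)) (bmul a c)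
}.

Section BraceDefs.
Variables (T : finType) (B : brace T).

Local Notation "x + y" := (badd B x y).
Local Notation "- x" := (bopp B x).
Local Notation "x * y" := (bmul B x y).

Definition blambda (a b : T) : T := - a + a * b.

Definition bnatmul (g : T) (n : nat) : T := iter n (fun y => y + g) (bzero B).
Definition bintmul (g : T) (z : int) : T :=
  match z with Posz n => bnatmul g n | Negz n => - bnatmul g n.+1 end.

Definition is_ideal (I : {set T}) : Prop :=
  (bzero B \in I /\
   (forall x y, x \in I -> y \in I -> x + y \in I) /\
   (forall x, x \in I -> - x \in I)) /\
  (bone B \in I /\
   (forall x y, x \in I -> y \in I -> x * y \in I) /\
   (forall x, x \in I -> binv B x \in I)) /\
  (forall b x, x \in I -> b + x + - b \in I) /\
  (forall b x, x \in I -> b * x * binv B b \in I) /\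
  (forall b x, x \in I -> blambda b x \in I).

Definition bcoset (I : {set T}) (x : T) : {set T} := [set x + y | y in I].

Definition quot_order (I J : {set T}) : nat := #|[set bcoset I x | x in J]|.

Definition quot_inf_cyclic (I J : {set T}) : Prop :=
  exists2 g, g \in J &
    (forall x, x \in J -> exists z : int, bcoset I x = bcoset I (bintmul g z)) /\
    (forall z : int, z != 0%R -> bcoset I (bintmul g z) != bcoset I (bzero B)).

(* J/I <= Soc(B/I) = Ker lambda ∩ Z(B/I,+), written out on cosets *)
Definition quot_in_socle (I J : {set T}) : Prop :=
  forall x, x \in J -> forall b,
    bcoset I (blambda x b) = bcoset I b /\ bcoset I (x + b) = bcoset I (b + x).

Definition supersoluble : Prop :=
  exists (n : nat) (I : nat -> {set T}),
    [/\ I 0%N = [set bzero B], I n = [set: T],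
        (forall i, (i <= n)%N -> is_ideal (I i))
      & (forall i, (i < n)%N ->
           I i \subset I i.+1 /\
           ((quot_inf_cyclic (I i) (I i.+1) /\ quot_in_socle (I i) (I i.+1))
            \/ prime (quot_order (I i) (I i.+1))))].

End BraceDefs.

Definition squarefree (n : nat) : Prop := forall p, prime p -> ~~ (p * p %| n)%N.

(* Let G be a group of square-free order, p its smallest prime divisor and P a
   Sylow p-subgroup, of order p. As N_G(P)/C_G(P) embeds in Aut P, of order p - 1,
   N_G(P) = C_G(P); so elements of P that are conjugate in G are equal, the transfer
   of G into P is g |-> g ^+ |G : P| on P, and its kernel is a normal p-complement.
   By induction on |G|, O_pi(G) is then a Hall pi-subgroup whenever pi is the set
   of primes >= t.
   For a brace B of square-free order put I_t = O_pi(B,+). Each lambda_a is an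
   automorphism of (B,+), so it maps I_t into itself; hence I_t is closed under
   ab = a + lambda_a(b), is a Hall pi-subgroup of (B,.), and equals the normal
   subgroup O_pi(B,.). So I_t is an ideal, and letting t run down the prime
   divisors of |B| gives a chain of ideals whose factors have prime order. *)

From HB Require Import structures.
From mathcomp Require Import all_boot all_algebra all_fingroup all_solvable.
Set Implicit Arguments. Unset Strict Implicit. Unset Printing Implicit Defensive.
Import GRing.Theory.

Lemma squarefree_dvd m n : m %| n -> squarefree n -> squarefree m.
Proof. by move=> dvd_mn sqf_n p /sqf_n; apply: contra => /dvdn_trans->. Qed.

Lemma partn_squarefree n p : squarefree n -> p \in primes n -> n`_p = p.
Proof.
move=> sqf_n; rewrite mem_primes => /and3P[pr_p n_gt0 p_dvd_n].
have: 1 <= logn p n by rewrite -pfactor_dvdn ?expn1.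
have: ~~ (2 <= logn p n) by rewrite -pfactor_dvdn // sqf_n.
by rewrite p_part; case: (logn p n) => [|[|]].
Qed.

Definition pi_geq (t : nat) : nat_pred := [pred r | t <= r].

Lemma partn_pi_geq_id n t : 0 < n -> {in primes n, forall p, t <= p} ->
  n`_(pi_geq t) = n.
Proof.
move=> n_gt0 t_le; apply/part_pnat_id/pnatP => // p pr_p p_dvd_n.
by rewrite inE t_le // mem_primes pr_p n_gt0.
Qed.

Lemma partn_pi_geq_eq1 n t : 0 < n -> {in primes n, forall p, p < t} ->
  n`_(pi_geq t) = 1.
Proof.
move=> n_gt0 lt_t; apply/part_p'nat/pnatP => // p pr_p p_dvd_n.
by rewrite !inE -ltnNge lt_t // mem_primes pr_p n_gt0.
Qed.

Lemma partn_pi_geq_step n a b : squarefree n -> a \in primes n -> a < b ->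
    {in primes n, forall r, a <= r < b -> r = a} ->
  n`_(pi_geq a) = a * n`_(pi_geq b).
Proof.
move=> sqf_n n_a lt_ab between_ab.
have n_gt0 : 0 < n by move: n_a; rewrite mem_primes => /and3P[].
have sub_ba : {subset pi_geq b <= pi_geq a}.
  by move=> r; rewrite !inE => /(leq_trans (ltnW lt_ab)).
rewrite -{1}(partnC (pi_geq b) (part_gt0 _ n)) (partn_part _ sub_ba) mulnC.
rewrite -partnI; congr (_ * _); rewrite -[RHS](partn_squarefree sqf_n n_a).
apply: eq_in_partn => r n_r; rewrite !inE -ltnNge.
apply/idP/eqP => [/between_ab-> //|->]; by rewrite leqnn.
Qed.

Lemma sorted_nth_between (s : seq nat) d j x : sorted ltn s -> x \in s ->
  j < size s -> nth d s j <= x < nth d s j.+1 -> x = nth d s j.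
Proof.
move=> lt_s s_x j_lt /andP[le_jx lt_xj1]; rewrite -(nth_index d s_x) in le_jx lt_xj1 *.
have idx_lt : index x s < size s by rewrite index_mem.
have le_s : sorted leq s by move: lt_s; rewrite ltn_sorted_uniq_leq => /andP[].
congr nth; apply/eqP; rewrite eqn_leq; apply/andP; split.
  have [j1_lt|size_le] := ltnP j.+1 (size s); last by rewrite -ltnS (leq_trans idx_lt).
  rewrite leqNgt; apply: contraL lt_xj1 => lt_jx; rewrite -leqNgt.
  exact: (sorted_leq_nth leq_trans leqnn).
rewrite leqNgt; apply: contraL le_jx => lt_xj; rewrite -ltnNge.
exact: (sorted_ltn_nth ltn_trans).
Qed.

Section PrimeThresholds.
Variable n : nat.

(* [p_ j] is the j-th smallest prime divisor of n; past the end it is the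
   sentinel n.+1, which exceeds all of them. *)
Local Notation p_ j := (nth n.+1 (primes n) j).

Lemma nth_primes_ltS j : j < size (primes n) -> p_ j < p_ j.+1.
Proof.
move=> j_lt; have [j1_lt|size_le] := ltnP j.+1 (size (primes n)).
  exact: (sorted_ltn_nth ltn_trans _ (sorted_primes n)).
rewrite [p_ j.+1]nth_default //; move: (mem_nth n.+1 j_lt); rewrite mem_primes ltnS.
by case/and3P=> _ n_gt0; apply: dvdn_leq.
Qed.

Lemma partn_pi_geq_nth j : squarefree n -> j < size (primes n) ->
  n`_(pi_geq (p_ j)) = p_ j * n`_(pi_geq (p_ j.+1)).
Proof.
move=> sqf_n j_lt.
apply: partn_pi_geq_step (mem_nth _ j_lt) (nth_primes_ltS j_lt) _ => //.
by move=> r n_r; apply: sorted_nth_between (sorted_primes n) n_r j_lt.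
Qed.

Lemma partn_pi_geq_nth_size : 0 < n -> n`_(pi_geq (p_ (size (primes n)))) = 1.
Proof.
move=> n_gt0; rewrite nth_default //; apply: partn_pi_geq_eq1 => // r.
by rewrite mem_primes ltnS => /and3P[_ _]; apply: dvdn_leq.
Qed.

Lemma partn_pi_geq_nth0 : 0 < n -> n`_(pi_geq (p_ 0)) = n.
Proof.
move=> n_gt0; apply: partn_pi_geq_id => // r n_r; rewrite -(nth_index n.+1 n_r).
have := sorted_primes n; rewrite ltn_sorted_uniq_leq => /andP[_ le_primes].
have idx_lt : index r (primes n) < size (primes n) by rewrite index_mem.
by apply: (sorted_leq_nth leq_trans leqnn); rewrite // inE // (leq_ltn_trans _ idx_lt).
Qed.

End PrimeThresholds.

Section SquarefreeGroups.
Variable gT : finGroupType.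
Implicit Types G P : {group gT}.
Local Open Scope group_scope.

Lemma normal_setT_conj_mem (H : {group gT}) x y :
  H <| [set: gT] -> x \in H -> y * x * y^-1 \in H.
Proof.
move=> nH Hx; have Ny : y^-1 \in 'N(H) by rewrite (subsetP (normal_norm nH)) ?inE.
by rewrite -(memJ_norm x Ny) conjgE invgK mulgA in Hx.
Qed.

Lemma norm_sub_cent_min_prime G P : prime #|P| ->
  {in \pi(G), forall q, #|P| <= q} -> 'N_G(P) \subset 'C(P).
Proof.
move=> prP min_P; rewrite -indexg_eq1; set m := #|_ : _|.
have dvd_Aut : m %| #|P|.-1.
  have := cardSg (Aut_conj_aut P 'N_G(P)).
  by rewrite card_morphim ker_conj_aut (setIidPr (subsetIr _ _)) card_Aut_cyclic
    ?prime_cyclic // totient_prime.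
have dvd_G : m %| #|G| := dvdn_trans (dvdn_indexg _ _) (cardSg (subsetIl G _)).
apply: contraT => m_ne1.
have m_gt1 : 1 < m by rewrite ltn_neqAle eq_sym m_ne1 indexg_gt0.
have q_dvd_m := pdiv_dvd m.
have P_le_q : #|P| <= pdiv m.
  apply: min_P; rewrite mem_primes pdiv_prime // cardG_gt0.
  exact: dvdn_trans q_dvd_m dvd_G.
have q_le : pdiv m <= #|P|.-1.
  apply: dvdn_leq (dvdn_trans q_dvd_m dvd_Aut).
  by rewrite -ltnS prednK ?prime_gt0 // prime_gt1.
by move: (leq_trans P_le_q q_le); rewrite leqNgt ltn_predL prime_gt0.
Qed.

Lemma conjg_prime_cent G P u x : prime #|P| -> 'N_G(P) \subset 'C(P) ->
  u \in P -> x \in G -> u ^ x \in P -> u ^ x = u.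
Proof.
move=> prP nPcP Pu Gx Pux; have [->|u_ne1] := eqVneq u 1; first by rewrite conj1g.
have defP : P :=: <[u]> by apply: nt_gen_prime; rewrite // !inE u_ne1.
have Nx : x \in 'N(P).
  apply/normP/eqP; rewrite eqEcard cardJg leqnn andbT.
  by rewrite {1}defP -cycleJ cycle_subG.
have /centP cPx : x \in 'C(P) by apply: (subsetP nPcP); rewrite inE Gx.
by rewrite /conjg -(cPx u Pu) mulKg.
Qed.

Lemma transfer_prime_cent G P (abP : abelian (idm P @* P)) g :
    P \subset G -> prime #|P| -> 'N_G(P) \subset 'C(P) -> g \in P ->
  transfer G abP g = FiniteModule.fmod abP (g ^+ #|G : P|).
Proof.
move=> sPG prP nPcP Pg; have Gg := subsetP sPG g Pg.
have trX := transversalP (rcosets_cycle_partition sPG Gg).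
have fmodX n : FiniteModule.fmod abP (g ^+ n) = (FiniteModule.fmod abP g *+ n)%R.
  by apply: FiniteModule.fmodX; rewrite /= morphim_idm.
rewrite (transfer_cycle_expansion sPG abP Gg trX).
rewrite -(sum_index_rcosets_cycle sPG Gg trX) fmodX -sumrMnr.
apply: eq_bigr => x Xx; rewrite -fmodX /=.
have Gx : x^-1 \in G by rewrite groupV (subsetP (transversal_sub trX)).
rewrite (conjg_prime_cent prP nPcP _ Gx) ?groupX //.
(* The conjugated power lies in P because x * g ^+ n_x lies in the coset P :* x. *)
have := mulg_exp_card_rcosets P g x; rewrite mem_rcoset.
by rewrite conjgE invgK mulgA.
Qed.

Lemma Burnside_normal_complement_prime G P :
    P \subset G -> prime #|P| -> ~~ (#|P| %| #|G : P|) -> 'N_G(P) \subset 'C(P) ->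
  exists2 K : {group gT}, K <| G & #|G : K| = #|P|.
Proof.
move=> sPG prP p'iP nPcP.
have abP : abelian (idm P @* P) by rewrite morphim_idm // cyclic_abelian ?prime_cyclic.
pose f := transfer_morphism G abP.
exists ('ker f)%G; first exact: ker_normal.
have iK_dvd : #|G : 'ker f| %| #|P|.
  have := cardSg (subsetT (f @* G)); rewrite card_morphim setIid cardsT card_sub.
  by rewrite /= morphim_idm // cardsE.
have [g Pg g_ne1] : exists2 g, g \in P & g != 1.
  by apply/trivgPn; apply: contraTneq prP => ->; rewrite cards1.
have fg_ne0 : f g != 0%R.
  rewrite /f /= (transfer_prime_cent abP sPG) //; apply: contra p'iP => /eqP fg0.
  have Pgn : g ^+ #|G : P| \in idm P @* P by rewrite morphim_idm ?groupX.
  have := FiniteModule.fmodK abP Pgn; rewrite fg0 => /eqP; rewrite eq_sym.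
  by rewrite -order_dvdn orderE -(nt_gen_prime prP) // !inE g_ne1.
have /(primeP prP).2/orP[|/eqP //] := iK_dvd.
rewrite indexg_eq1 => /subsetP/(_ g (subsetP sPG g Pg)) Kg.
by rewrite (mker Kg) eqxx in fg_ne0.
Qed.

Lemma squarefree_normal_complement G p : squarefree #|G| -> p \in \pi(G) ->
    {in \pi(G), forall q, p <= q} ->
  exists2 K : {group gT}, K <| G & #|G : K| = p.
Proof.
move=> sqfG piGp min_p.
have pr_p : prime p by move: piGp; rewrite mem_primes => /andP[].
have [P sylP] := Sylow_exists p G; have sPG := pHall_sub sylP.
have oP : #|P| = p by rewrite (card_Hall sylP) (partn_squarefree sqfG).
rewrite -oP; apply: Burnside_normal_complement_prime; rewrite ?oP //.
- move: (sqfG p pr_p); rewrite -(Lagrange sPG) oP; apply: contra.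
  exact: dvdn_mul (dvdnn p).
- by apply: norm_sub_cent_min_prime; rewrite ?oP.
Qed.

Lemma squarefree_pcore_geq_Hall t G : squarefree #|G| ->
  (pi_geq t).-Hall(G) 'O_(pi_geq t)(G).
Proof.
set pi := pi_geq t; have [m] := ubnP #|G|.
elim: m G => // m IHm G /ltnSE-leGm sqfG.
have [piG|pi'G] := boolP (pi.-group G).
  by rewrite pcore_pgroup_id // pHallE subxx /= part_pnat_id.
have G_gt1 : 1 < #|G|.
  by rewrite ltnNge; apply: contra pi'G => /card_le1_trivg->; exact: pgroup1.
set q := pdiv #|G|.
have pr_q : prime q := pdiv_prime G_gt1.
have piGq : q \in \pi(G) by rewrite mem_primes pr_q cardG_gt0 pdiv_dvd.
have min_q : {in \pi(G), forall r, q <= r}.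
  move=> r; rewrite mem_primes => /and3P[pr_r _].
  exact: pdiv_min_dvd (prime_gt1 pr_r).
have [K nKG iKq] := squarefree_normal_complement sqfG piGq min_q.
have oG : #|G| = (#|K| * q)%N by rewrite -iKq Lagrange ?normal_sub.
have pi'q : q \notin pi.
  apply: contra pi'G => q_ge_t; apply/pgroupP => r pr_r r_dvd.
  by rewrite inE (leq_trans q_ge_t) // min_q // mem_primes pr_r cardG_gt0.
have hallK : pi.-Hall(K) 'O_pi(K).
  apply: IHm; last by apply: squarefree_dvd sqfG; rewrite cardSg ?normal_sub.
  by apply: leq_trans leGm; rewrite oG ltn_Pmulr ?prime_gt1.
have hallG : pi.-Hall(G) 'O_pi(K).
  rewrite pHallE (subset_trans (pcore_sub _ _) (normal_sub nKG)) (card_Hall hallK).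
  rewrite oG (partnM _ (cardG_gt0 K) (prime_gt0 pr_q)).
  by rewrite [(q`_ _)%N]part_p'nat ?muln1 ?eqxx // pnatE // inE.
by rewrite (normal_Hall_pcore hallG (char_normal_trans (pcore_char _ _) nKG)).
Qed.

End SquarefreeGroups.

Lemma card_preim_bij (U V : finType) (f : U -> V) (A : {set V}) :
  bijective f -> #|f @^-1: A| = #|A|.
Proof. by move=> bij_f; apply/on_card_preimset/onW_bij. Qed.

Definition add_group (T : finType) (B : brace T) : Type := T.
Definition mul_group (T : finType) (B : brace T) : Type := T.

Section BraceGroups.
Variables (T : finType) (B : brace T).

HB.instance Definition _ := Finite.on (add_group B).
HB.instance Definition _ :=
  Finite_isGroup.Build (add_group B) (@baddA T B) (@badd0l T B) (@baddNl T B).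
HB.instance Definition _ := Finite.on (mul_group B).
HB.instance Definition _ :=
  Finite_isGroup.Build (mul_group B) (@bmulA T B) (@bmul1l T B) (@bmulVl T B).

(* Sets of the two group copies of T have their own types; they are moved to and
   from {set T} as preimages under these identity maps. *)
Definition to_add : T -> add_group B := id.
Definition of_mul : mul_group B -> T := id.

Local Notation "x + y" := (badd B x y).
Local Notation "- x" := (bopp B x).
Local Notation "x * y" := (bmul B x y).

Lemma bone_zero : bone B = bzero B.
Proof.
have := bdist B (bone B) (bzero B) (bzero B).
rewrite !bmul1l !badd0l !badd0r => zero_eq.
have oppK : - - bone B = bone B := @invgK (add_group B) (bone B).
have opp0 : - bzero B = bzero B := @invg1 (add_group B).
by rewrite -oppK -zero_eq opp0.
Qed.

Lemma blambdaD a x y : blambda B a (x + y) = blambda B a x + blambda B a y.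
Proof. by rewrite /blambda bdist -!baddA. Qed.

Lemma bmul_lambda a x : a * x = a + blambda B a x.
Proof. by rewrite /blambda baddA baddNr badd0l. Qed.

Lemma blambda_morphM a : {in [set: add_group B] &,
  {morph (blambda B a : add_group B -> add_group B) : x y / (x * y)%g}}.
Proof. by move=> x y _ _; apply: blambdaD. Qed.

Definition blambda_morphism a := Morphism (blambda_morphM a).

Lemma card_add_group : #|[set: add_group B]| = #|T|.
Proof. by rewrite cardsT -(@bij_eq_card _ _ to_add) //; exists id. Qed.

Lemma card_mul_group : #|[set: mul_group B]| = #|T|.
Proof. by rewrite cardsT -(@bij_eq_card _ _ of_mul) //; exists id. Qed.

Lemma bcoset_preim (H : {set add_group B}) x :
  bcoset B (to_add @^-1: H) x = to_add @^-1: (to_add x *: H)%g.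
Proof.
apply/setP=> y; rewrite inE mem_lcoset; apply/imsetP/idP => [[z Hz ->]|Hy].
  by rewrite inE in Hz; rewrite mulKg.
by exists (- x + y); rewrite ?inE // baddA baddNr badd0l.
Qed.

Lemma quot_order_preim (H G : {set add_group B}) :
  quot_order B (to_add @^-1: H) (to_add @^-1: G) = #|lcosets H G|.
Proof.
have preim_inj : injective (fun A : {set add_group B} => to_add @^-1: A).
  by move=> A1 A2 /= /setP eqA; apply/setP => x; have := eqA x; rewrite !inE.
rewrite /quot_order -(card_imset _ preim_inj).
suff -> : [set bcoset B (to_add @^-1: H) x | x in to_add @^-1: G]
  = [set to_add @^-1: A | A : {set add_group B} in lcosets H G] by [].
apply/setP=> C; apply/imsetP/imsetP => [[x Gx ->]|[_ /imsetP[x Gx ->] ->]].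
  exists (to_add x *: H)%g; rewrite ?bcoset_preim // -lcosetE.
  by rewrite inE in Gx; apply: imset_f.
by exists x; rewrite ?bcoset_preim ?inE // lcosetE.
Qed.

End BraceGroups.

Section BraceIdeals.
Variables (T : finType) (B : brace T) (t : nat).

Local Notation pi := (pi_geq t).
Local Notation O_add := 'O_pi([set: add_group B])%g.
Local Notation O_mul := 'O_pi([set: mul_group B])%g.
Local Notation "x * y" := (bmul B x y).

Definition bideal_geq : {set T} := to_add B @^-1: O_add.

Hypothesis sqfT : squarefree #|T|.

Let hall_add : (pi.-Hall([set: add_group B]) O_add)%g.
Proof. by apply: squarefree_pcore_geq_Hall; rewrite card_add_group. Qed.

Lemma card_bideal_geq : #|bideal_geq| = #|T|`_pi.
Proof.
rewrite card_preim_bij ?(card_Hall hall_add) ?card_add_group //.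
by exists id.
Qed.

Lemma blambda_bideal_geq a x : x \in bideal_geq -> blambda B a x \in bideal_geq.
Proof.
rewrite !inE => Ox.
have sub : (blambda_morphism B a @* O_add \subset O_add)%g.
  rewrite (sub_Hall_pcore hall_add) ?subsetT //.
  by apply: morphim_pgroup; apply: pcore_pgroup.
by apply: (subsetP sub); apply: mem_morphim => //; rewrite inE.
Qed.

Lemma bideal_geqM x y : x \in bideal_geq -> y \in bideal_geq -> x * y \in bideal_geq.
Proof.
move=> Ix /(blambda_bideal_geq x) Iy; rewrite bmul_lambda.
by move: Ix Iy; rewrite !inE; apply: groupM.
Qed.

Lemma bideal_geq_mul : @of_mul _ B @^-1: bideal_geq = O_mul.
Proof.
have gI : group_set (@of_mul _ B @^-1: bideal_geq).
  apply/group_setP; split=> [|x y]; rewrite ![_ \in @of_mul _ B @^-1: _]inE.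
    rewrite (_ : @of_mul _ B 1%g = bzero B); last exact: bone_zero.
    by rewrite inE; exact: group1.
  exact: bideal_geqM.
apply: (eq_Hall_pcore (H := Group gI)).
  by apply: squarefree_pcore_geq_Hall; rewrite card_mul_group.
rewrite pHallE subsetT /= card_preim_bij ?card_mul_group ?card_bideal_geq //.
by exists id.
Qed.

Lemma mem_bideal_geq_mul x :
  (x \in bideal_geq) = ((x : mul_group B) \in O_mul).
Proof. by rewrite -bideal_geq_mul [in RHS]inE. Qed.

Lemma is_ideal_bideal_geq : is_ideal B bideal_geq.
Proof.
have nOA := pcore_normal pi [set: add_group B].
have nOM := pcore_normal pi [set: mul_group B].
split; [|split; [|split; [|split]]].
- split; [|split] => [|x y|x]; rewrite !inE.
  + exact: group1.
  + exact: groupM.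
  + exact: groupVr.
- split; [|split] => [|x y|x]; rewrite ?mem_bideal_geq_mul.
  + exact: group1.
  + exact: groupM.
  + exact: groupVr.
- by move=> b x; rewrite !inE; exact: normal_setT_conj_mem.
- by move=> b x; rewrite !mem_bideal_geq_mul; exact: normal_setT_conj_mem.
- exact: blambda_bideal_geq.
Qed.

End BraceIdeals.

Lemma bideal_geq_sub (T : finType) (B : brace T) a b :
  a <= b -> bideal_geq B b \subset bideal_geq B a.
Proof.
move=> le_ab; apply: preimsetS; apply: sub_pcore => r; rewrite !inE.
exact: leq_trans.
Qed.

Lemma quot_order_bideal_geq (T : finType) (B : brace T) a b :
    squarefree #|T| -> a <= b ->
  quot_order B (bideal_geq B b) (bideal_geq B a) = #|T|`_(pi_geq a) %/ #|T|`_(pi_geq b).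
Proof.
move=> sqfT le_ab; rewrite quot_order_preim card_lcosets -divgS; last first.
  by apply: sub_pcore => r; rewrite !inE; exact: leq_trans.
by rewrite -!(card_bideal_geq B _ sqfT) !card_preim_bij //; exists id.
Qed.

Theorem corollary3p9 (T : finType) (B : brace T) :
  squarefree #|T| -> supersoluble B.
Proof.
move=> sqfT; have n_gt0 : 0 < #|T| by apply/card_gt0P; exists (bzero B).
pose k := size (primes #|T|); pose p j := nth #|T|.+1 (primes #|T|) j.
exists k, (fun i => bideal_geq B (p (k - i))); split=> [||i _|i lt_ik].
- have [[I0 _] _] := is_ideal_bideal_geq B (p k) sqfT.
  apply/eqP; rewrite eq_sym subn0 eqEcard sub1set I0 cards1.
  by rewrite card_bideal_geq // partn_pi_geq_nth_size.
- apply/eqP; rewrite subnn eqEcard subsetT cardsT card_bideal_geq //.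
  by rewrite partn_pi_geq_nth0 ?leqnn.
- exact: is_ideal_bideal_geq.
rewrite -subnSK //; set j := k - i.+1.
have lt_jk : j < k by rewrite ltn_subrL (leq_ltn_trans _ lt_ik).
have le_p : p j <= p j.+1 := ltnW (nth_primes_ltS lt_jk).
split; first exact: bideal_geq_sub.
right; rewrite quot_order_bideal_geq // partn_pi_geq_nth // mulnK //.
by have := mem_nth #|T|.+1 lt_jk; rewrite mem_primes => /andP[].
Qed.
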